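(* Let $J$ be a set, let $\mathbb I=[J]^{\leq\omega}$ be the set of countable subsets of $J$ ordered by inclusion, and for $D\in\mathbb I$ let $G_D=\{\sigma\in\operatorname{Sym}(J)\mid\operatorname{supp}(\sigma)\subseteq D\}$ with the subgroup topology. Then $\{G_D\}_{D\in\mathbb I}$ (with inclusions as bonding maps) satisfies ACP, and $\operatorname{colim}_{D\in\mathbb I}G_D=\operatorname{Sym}_\omega(J)$.
   Context: $\operatorname{Sym}(J)$ is the group of permutations of $J$ with the pointwise topology induced from $J^J$, $J$ being discrete; it is a topological group. The support of $\sigma$ is $\operatorname{supp}(\sigma)=\{x\in J\mid\sigma(x)\neq x\}$, and $\operatorname{Sym}_\omega(J)$ is the subgroup of permutations with countable support, with the subspace topology. $\operatorname{colim}$ denotes the union with the colimit space topology $\{U\mid U\cap G_D\text{ open in }G_D\ \forall D\}$. ACP means that this colimit space topology coincides with the finest group topology on the union making all inclusions continuous. *)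

(* sets are predicates, topologies are families of predicates. *)
From Stdlib Require Import List.
Import ListNotations.

Section Defs.
Variable J : Type.

Definition pset := (J -> J) -> Prop.

Definition is_perm (f : J -> J) : Prop :=
  exists g : J -> J, (forall x, g (f x) = x) /\ (forall x, f (g x) = x).

Definition supp (f : J -> J) : J -> Prop := fun x => f x <> x.

Definition countable_set (D : J -> Prop) : Prop :=
  exists c : J -> nat, forall x y, D x -> D y -> c x = c y -> x = y.

Definition Sym : pset := is_perm.

Definition G_ (D : J -> Prop) : pset :=
  fun f => is_perm f /\ (forall x, supp f x -> D x).

Definition Sym_omega : pset := fun f => is_perm f /\ countable_set (supp f).

(* pointwise topology on J^J, J discrete: basic opens fix finitely many values *)
Definition pointwise_open (V : pset) : Prop :=
  forall f, V f -> exists l : list J,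
    forall g, (forall x, In x l -> g x = f x) -> V g.

Definition subspace_open (Topen : pset -> Prop) (S : pset) (U : pset) : Prop :=
  exists V, Topen V /\ forall f, U f <-> (V f /\ S f).

Definition G_open (D : J -> Prop) : pset -> Prop :=
  subspace_open (subspace_open pointwise_open Sym) (G_ D).

Definition union_G : pset := fun f => exists D, countable_set D /\ G_ D f.

Definition colim_open (U : pset) : Prop :=
  (forall f, U f -> union_G f) /\
  (forall D, countable_set D -> G_open D (fun f => U f /\ G_ D f)).

Definition is_topology (S : pset) (T : pset -> Prop) : Prop :=
  (forall U, T U -> forall f, U f -> S f) /\
  T (fun _ => False) /\ T S /\
  (forall F : pset -> Prop, (forall U, F U -> T U) ->
      T (fun f => exists U, F U /\ U f)) /\
  (forall U V, T U -> T V -> T (fun f => U f /\ V f)).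

Definition is_group_topology (S : pset) (T : pset -> Prop) : Prop :=
  is_topology S T /\
  (* multiplication S x S -> S continuous (product topology) *)
  (forall W, T W -> forall f g, S f -> S g -> W (fun x => f (g x)) ->
     exists A B, T A /\ T B /\ A f /\ B g /\
       forall a b, A a -> B b -> W (fun x => a (b x))) /\
  (* inversion continuous: preimage of an open set under inversion is open *)
  (forall W, T W -> T (fun f => S f /\ exists g, W g /\
        (forall x, g (f x) = x) /\ (forall x, f (g x) = x))).

Definition inclusions_continuous (T : pset -> Prop) : Prop :=
  forall D, countable_set D -> forall V, T V -> G_open D (fun f => V f /\ G_ D f).

Definition ACP : Prop :=
  is_group_topology union_G colim_open /\ inclusions_continuous colim_open /\
  (forall T, is_group_topology union_G T -> inclusions_continuous T ->
     forall U, T U -> colim_open U).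

End Defs.

From Stdlib Require Import List Arith Lia Cantor.
From Stdlib Require Import Classical ClassicalEpsilon FunctionalExtensionality PropExtensionality.
Import ListNotations.

(* Both topologies in question are the pointwise topology of Sym_omega(J),
   which is a group topology; ACP is then formal.  The one real point is that
   a colimit-open U is pointwise open at each f in U.  If not, pick for every
   finite list l a counterexample h_l in Sym_omega(J) agreeing with f on l but
   outside U.  Interleaving countably many enumerations closes supp f to a
   countable D exhausted by an increasing sequence of finite lists L_N with
   supp h_(L_N) contained in D for every N.  Openness of U ∩ G_D at f yields a
   finite l; with l ∩ D inside some L_N, the permutation h_(L_N) lies in G_D
   and agrees with f on l (outside D both are the identity), hence lies in U,
   a contradiction. *)

Lemma firstn_seq k start n : k <= n -> firstn k (seq start n) = seq start k.
Proof.
  intros Hkn. replace n with (k + (n - k)) by lia.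
  rewrite seq_app, firstn_app, length_seq, Nat.sub_diag, firstn_O, app_nil_r.
  apply firstn_all2. rewrite length_seq. lia.
Qed.

Section Countable.
Variable J : Type.

Definition enumerates (e : nat -> option J) (A : J -> Prop) : Prop :=
  forall y, A y <-> exists n, e n = Some y.

Lemma countable_enumerates (A : J -> Prop) :
  countable_set J A -> exists e, enumerates e A.
Proof.
  intros [c c_inj].
  assert (fiber : forall n, exists o : option J,
             forall y, o = Some y <-> A y /\ c y = n).
  { intro n. destruct (classic (exists y, A y /\ c y = n)) as [[y [Ay cy]] | none].
    - exists (Some y). intro y'. split.
      + intros E. injection E as <-. auto.
      + intros [Ay' cy']. f_equal. apply c_inj; congruence.
    - exists None. intro y'. split; [discriminate|].
      intros H. exfalso. eauto. }
  destruct (choice _ fiber) as [e He]. exists e. intro y. split.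
  - intros Ay. exists (c y). apply He. auto.
  - intros [n En]. apply He in En. tauto.
Qed.

Lemma enumerates_countable (e : nat -> option J) (A : J -> Prop) :
  enumerates e A -> countable_set J A.
Proof.
  intros He.
  assert (index : forall y, exists n, A y -> e n = Some y).
  { intro y. destruct (classic (A y)) as [Ay | nAy].
    - destruct (proj1 (He y) Ay) as [n En]. eauto.
    - exists 0. contradiction. }
  destruct (choice _ index) as [c Hc]. exists c.
  intros x y Ax Ay E. pose proof (Hc x Ax) as ex. rewrite E, (Hc y Ay) in ex. congruence.
Qed.

Lemma countable_subset (A B : J -> Prop) :
  countable_set J A -> (forall x, B x -> A x) -> countable_set J B.
Proof. intros [c Hc] BA. exists c. auto. Qed.

Lemma countable_union (A B : J -> Prop) :
  countable_set J A -> countable_set J B -> countable_set J (fun x => A x \/ B x).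
Proof.
  intros [ca Ha] [cb Hb].
  exists (fun x => if excluded_middle_informative (A x) then 2 * ca x else S (2 * cb x)).
  intros x y Hx Hy.
  destruct (excluded_middle_informative (A x)), (excluded_middle_informative (A y));
    intros E; try lia.
  - apply Ha; auto. lia.
  - apply Hb; try tauto. lia.
Qed.

End Countable.

Section Closure.
Variable J : Type.
Variable e0 : nat -> option J.
Variable s : list J -> nat -> option J.

Definition somes (l : list (option J)) : list J :=
  flat_map (fun o => match o with Some y => [y] | None => [] end) l.

(* Point [to_nat (0, j)] is [e0 j]; point [to_nat (S k, j)] is entry [j] of
   [s] at the list of the points of index [< k], already built since
   [k < to_nat (S k, j)]. *)
Definition next_point (prefix : list (option J)) (n : nat) : option J :=
  match Cantor.of_nat n with
  | (0, j) => e0 j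
  | (S k, j) => s (somes (firstn k prefix)) j
  end.

Fixpoint points_below (n : nat) : list (option J) :=
  match n with
  | 0 => []
  | S m => points_below m ++ [next_point (points_below m) m]
  end.

Definition point (n : nat) : option J := next_point (points_below n) n.

Definition stage (k : nat) : list J := somes (points_below k).

Lemma points_below_eq n : points_below n = map point (seq 0 n).
Proof.
  induction n as [|n IH]; [reflexivity|].
  simpl points_below. rewrite seq_S, map_app, <- IH. reflexivity.
Qed.

Lemma in_stage N y : In y (stage N) <-> exists m, m < N /\ point m = Some y.
Proof.
  unfold stage, somes. rewrite points_below_eq, in_flat_map. split.
  - intros [o [Ho Hy]]. apply in_map_iff in Ho as [m [<- Hm]].
    apply in_seq in Hm. exists m. split; [lia|].
    destruct (point m) as [z|]; [destruct Hy as [<-|[]]; reflexivity | destruct Hy].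
  - intros [m [Hm Pm]]. exists (Some y). split; [|left; reflexivity].
    apply in_map_iff. exists m. split; [exact Pm|]. apply in_seq. lia.
Qed.

Lemma point_initial j : point (Cantor.to_nat (0, j)) = e0 j.
Proof. unfold point, next_point. rewrite Cantor.cancel_of_to. reflexivity. Qed.

Lemma point_step k j : point (Cantor.to_nat (S k, j)) = s (stage k) j.
Proof.
  unfold point, next_point. rewrite Cantor.cancel_of_to.
  unfold stage. rewrite !points_below_eq, firstn_map, firstn_seq; [reflexivity|].
  pose proof (Cantor.to_nat_non_decreasing (S k) j). lia.
Qed.

Lemma stages_exhaust (l : list J) :
  exists N, forall x, In x l -> (exists n, point n = Some x) -> In x (stage N).
Proof.
  induction l as [|a l [N HN]].
  - exists 0. intros x [].
  - destruct (classic (exists n, point n = Some a)) as [[n Pn] | nPa].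
    + exists (Nat.max N (S n)). intros x Hx Px. apply in_stage.
      destruct Hx as [<- | Hx].
      * exists n. split; [lia | exact Pn].
      * apply HN, in_stage in Px as [m [Hm Pm]]; [|exact Hx].
        exists m. split; [lia | exact Pm].
    + exists N. intros x [<- | Hx] Px; [contradiction | auto].
Qed.

End Closure.

Lemma countable_closure (J : Type) (A : J -> Prop) (F : list J -> J -> Prop) :
  countable_set J A -> (forall l, countable_set J (F l)) ->
  exists D, countable_set J D /\ (forall x, A x -> D x) /\
    forall l, exists L, (forall x, In x l -> D x -> In x L) /\ (forall x, F L x -> D x).
Proof.
  intros HA HF.
  destruct (countable_enumerates J A HA) as [e0 He0].
  destruct (choice _ (fun l => countable_enumerates J (F l) (HF l))) as [s Hs].
  exists (fun y => exists n, point J e0 s n = Some y). split; [|split].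
  - apply (enumerates_countable J (point J e0 s)). intro y. reflexivity.
  - intros x Ax. apply He0 in Ax as [j Ej].
    exists (Cantor.to_nat (0, j)). rewrite point_initial. exact Ej.
  - intro l. destruct (stages_exhaust J e0 s l) as [N HN].
    exists (stage J e0 s N). split; [exact HN|].
    intros x Fx. apply Hs in Fx as [j Ej].
    exists (Cantor.to_nat (S N, j)). rewrite point_step. exact Ej.
Qed.

Section PointwiseTopology.
Variable J : Type.

Definition agree_on (l : list J) (g h : J -> J) : Prop := forall x, In x l -> g x = h x.

Definition locally_open (S U : pset J) : Prop :=
  (forall f, U f -> S f) /\
  (forall f, U f -> exists l, forall h, S h -> agree_on l h f -> U h).

Lemma subspace_pointwise_open_iff (S U : pset J) :
  subspace_open J (pointwise_open J) S U <-> locally_open S U.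
Proof.
  split.
  - intros [V [HV HU]]. split.
    + intros f Uf. apply HU in Uf. tauto.
    + intros f Uf. destruct (proj1 (HU f) Uf) as [Vf _].
      destruct (HV f Vf) as [l Hl]. exists l. intros h Sh Ah.
      apply HU. auto.
  - intros [US HU].
    exists (fun g => exists f l, agree_on l g f /\
                      forall h, S h -> agree_on l h f -> U h).
    split.
    + intros g [f [l [Ag Hl]]]. exists l. intros g' Ag'.
      exists f, l. split; [|exact Hl].
      intros x Hx. rewrite Ag', Ag; auto.
    + intro f. split.
      * intros Uf. split; [|auto]. destruct (HU f Uf) as [l Hl].
        exists f, l. split; [intros x _; reflexivity | exact Hl].
      * intros [[f0 [l [Ag Hl]]] Sf]. auto.
Qed.

Lemma subspace_open_trans (T : pset J -> Prop) (S S' U : pset J) :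
  (forall f, S' f -> S f) ->
  subspace_open J (subspace_open J T S) S' U <-> subspace_open J T S' U.
Proof.
  intros S'S. split.
  - intros [V [[W [HW HV]] HU]]. exists W. split; [exact HW|].
    intro f. rewrite HU, HV. intuition.
  - intros [W [HW HU]]. exists (fun f => W f /\ S f). split.
    + exists W. split; [exact HW | tauto].
    + intro f. rewrite HU. intuition.
Qed.

Lemma locally_open_restrict (S S' U : pset J) :
  (forall f, S' f -> S f) -> locally_open S U -> locally_open S' (fun f => U f /\ S' f).
Proof.
  intros S'S [US HU]. split; [tauto|].
  intros f [Uf _]. destruct (HU f Uf) as [l Hl]. exists l. auto.
Qed.

Section GroupTopology.
Variable S : pset J.
Hypothesis S_perm : forall h, S h -> is_perm J h.
Hypothesis S_comp : forall a b, S a -> S b -> S (fun x => a (b x)).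
Hypothesis S_inv : forall h h', S h ->
  (forall x, h' (h x) = x) -> (forall x, h (h' x) = x) -> S h'.

Lemma locally_open_agree_on (l : list J) (f : J -> J) :
  locally_open S (fun g => S g /\ agree_on l g f).
Proof.
  split; [tauto|]. intros g [_ Ag]. exists l. intros h Sh Ah. split; [exact Sh|].
  intros x Hx. rewrite Ah, Ag; auto.
Qed.

Lemma locally_open_topology : is_topology J S (locally_open S).
Proof.
  split; [|split; [|split; [|split]]].
  - intros U HU. apply HU.
  - split; intros f Hf; contradiction.
  - split; [auto|]. intros f _. exists []. auto.
  - intros Fam HFam. split.
    + intros f [U [FU Uf]]. exact (proj1 (HFam U FU) f Uf).
    + intros f [U [FU Uf]]. destruct (proj2 (HFam U FU) f Uf) as [l Hl].
      exists l. eauto.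
  - intros U V [US HU] [_ HV]. split; [firstorder|].
    intros f [Uf Vf]. destruct (HU f Uf) as [l1 H1], (HV f Vf) as [l2 H2].
    exists (l1 ++ l2). intros h Sh Ah.
    split; [apply H1 | apply H2]; auto; intros x Hx; apply Ah, in_or_app; auto.
Qed.

(* [a (b x)] agrees with [f (g x)] on [l] once [b] agrees with [g] on [l] and
   [a] agrees with [f] on [map g l]. *)
Lemma locally_open_mul_continuous (W : pset J) :
  locally_open S W -> forall f g, S f -> S g -> W (fun x => f (g x)) ->
  exists A B, locally_open S A /\ locally_open S B /\ A f /\ B g /\
    forall a b, A a -> B b -> W (fun x => a (b x)).
Proof.
  intros [_ HW] f g Sf Sg Wfg. destruct (HW _ Wfg) as [l Hl].
  exists (fun a => S a /\ agree_on (map g l) a f), (fun b => S b /\ agree_on l b g).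
  split; [|split; [|split; [|split]]].
  - apply locally_open_agree_on.
  - apply locally_open_agree_on.
  - split; [exact Sf | intros x _; reflexivity].
  - split; [exact Sg | intros x _; reflexivity].
  - intros a b [Sa Aa] [Sb Ab]. apply Hl; [auto|].
    intros x Hx. rewrite Ab by exact Hx. apply Aa, in_map, Hx.
Qed.

(* If [h] agrees with [f] on [map g l], with [g] inverse to [f], then the
   inverse of [h] agrees with [g] on [l]. *)
Lemma locally_open_inv_continuous (W : pset J) :
  locally_open S W ->
  locally_open S (fun f => S f /\ exists g, W g /\
     (forall x, g (f x) = x) /\ (forall x, f (g x) = x)).
Proof.
  intros [_ HW]. split; [tauto|].
  intros f [Sf [g [Wg [gf fg]]]]. destruct (HW g Wg) as [l Hl].
  exists (map g l). intros h Sh Ah. split; [exact Sh|].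
  destruct (S_perm h Sh) as [h' [h'h hh']].
  exists h'. split; [|auto].
  apply Hl; [exact (S_inv h h' Sh h'h hh')|].
  intros y Hy. assert (E : h (g y) = y).
  { rewrite Ah by (apply in_map, Hy). apply fg. }
  rewrite <- E at 1. apply h'h.
Qed.

Lemma locally_open_group_topology : is_group_topology J S (locally_open S).
Proof.
  split; [|split].
  - exact locally_open_topology.
  - exact locally_open_mul_continuous.
  - exact locally_open_inv_continuous.
Qed.

End GroupTopology.
End PointwiseTopology.

Section CountableSupport.
Variable J : Type.

Lemma Sym_omega_comp (a b : J -> J) :
  Sym_omega J a -> Sym_omega J b -> Sym_omega J (fun x => a (b x)).
Proof.
  intros [[a' [a'a aa']] Ca] [[b' [b'b bb']] Cb]. split.
  - exists (fun x => b' (a' x)). split; intro x.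
    + rewrite a'a, b'b. reflexivity.
    + rewrite bb', aa'. reflexivity.
  - apply (countable_subset J _ _ (countable_union J _ _ Ca Cb)).
    intros x Hx. destruct (classic (b x = x)) as [E | E]; [left | right; exact E].
    intro E'. apply Hx. rewrite E. exact E'.
Qed.

Lemma Sym_omega_inv (h h' : J -> J) :
  Sym_omega J h -> (forall x, h' (h x) = x) -> (forall x, h (h' x) = x) ->
  Sym_omega J h'.
Proof.
  intros [_ Ch] h'h hh'. split.
  - exists h. auto.
  - apply (countable_subset J _ _ Ch). intros x Hx E. apply Hx.
    rewrite <- E at 1. apply h'h.
Qed.

Lemma G_Sym_omega (D : J -> Prop) (g : J -> J) :
  countable_set J D -> G_ J D g -> Sym_omega J g.
Proof. intros HD [Pg Hg]. split; [exact Pg|]. exact (countable_subset J _ _ HD Hg). Qed.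

Lemma union_G_iff (f : J -> J) : union_G J f <-> Sym_omega J f.
Proof.
  split.
  - intros [D [HD Gf]]. exact (G_Sym_omega D f HD Gf).
  - intros [Pf Cf]. exists (supp J f). split; [exact Cf|]. split; auto.
Qed.

Lemma G_open_iff (D : J -> Prop) (U : pset J) :
  G_open J D U <-> locally_open J (G_ J D) U.
Proof.
  unfold G_open. rewrite subspace_open_trans by (intros f Gf; apply Gf).
  apply subspace_pointwise_open_iff.
Qed.

Lemma colim_open_locally (U : pset J) (f : J -> J) :
  colim_open J U -> U f ->
  exists l, forall h, Sym_omega J h -> agree_on J l h f -> U h.
Proof.
  intros [UG HU] Uf. apply NNPP. intro not_open.
  assert (escape : forall l, exists h, Sym_omega J h /\ agree_on J l h f /\ ~ U h).
  { intro l. apply NNPP. intro none. apply not_open. exists l. intros h Sh Ah.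
    apply NNPP. intro nUh. apply none. eauto. }
  destruct (choice _ escape) as [c Hc].
  destruct (countable_closure J (supp J f) (fun l => supp J (c l))) as [D [HD [fD closed]]].
  - apply union_G_iff, UG, Uf.
  - intro l. apply (Hc l).
  - assert (Gf : G_ J D f) by (split; [apply union_G_iff, UG, Uf | exact fD]).
    destruct (proj2 (proj1 (G_open_iff D _) (HU D HD)) f (conj Uf Gf)) as [l Hl].
    destruct (closed l) as [L [lL cLD]].
    destruct (Hc L) as [ScL [AcL nUcL]].
    assert (GcL : G_ J D (c L)) by (split; [apply ScL | exact cLD]).
    apply nUcL, (Hl (c L) GcL).
    intros x Hx. destruct (classic (D x)) as [Dx | nDx]; [auto|].
    transitivity x; [|symmetry]; apply NNPP; intro E; apply nDx;
      [apply GcL | apply Gf]; exact E.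
Qed.

Lemma colim_open_iff (U : pset J) : colim_open J U <-> locally_open J (Sym_omega J) U.
Proof.
  split.
  - intros HU. split.
    + intros f Uf. apply union_G_iff, (proj1 HU f Uf).
    + intros f Uf. exact (colim_open_locally U f HU Uf).
  - intros HU. split.
    + intros f Uf. apply union_G_iff, (proj1 HU f Uf).
    + intros D HD. apply G_open_iff, (locally_open_restrict J (Sym_omega J)); [|exact HU].
      intros g. exact (G_Sym_omega D g HD).
Qed.

End CountableSupport.

Theorem corollary2p7 (J : Type) :
  ACP J /\
  (forall f, union_G J f <-> Sym_omega J f) /\
  (forall U, colim_open J U <-> subspace_open J (pointwise_open J) (Sym_omega J) U).
Proof.
  assert (union_eq : union_G J = Sym_omega J).
  { extensionality f. apply propositional_extensionality, union_G_iff. }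
  assert (colim_eq : colim_open J = locally_open J (Sym_omega J)).
  { extensionality U. apply propositional_extensionality, colim_open_iff. }
  split; [split; [|split] | split].
  - rewrite union_eq, colim_eq. apply locally_open_group_topology.
    + intros h Sh. apply Sh.
    + apply Sym_omega_comp.
    + apply Sym_omega_inv.
  - intros D HD V HV. exact (proj2 HV D HD).
  - intros T [[T_sub _] _] T_incl U TU. split.
    + exact (T_sub U TU).
    + intros D HD. exact (T_incl D HD U TU).
  - apply union_G_iff.
  - intro U. rewrite colim_open_iff, subspace_pointwise_open_iff. reflexivity.
Qed.
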